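(* Let $p$ be an odd prime, $q\in\mathbb{C}_p$ with $|q-1|_p<1$, $\alpha\in\mathbb{N}\cup\{0\}$, $h\in\mathbb{N}$. Let $s\in\mathbb{N}$ with $s\ge2$ and let $n_1,\dots,n_s,k$ be nonnegative integers with $\sum_{l=1}^s n_l>sk$. Then \[ \sum_{l=0}^{n_1+\cdots+n_s-sk}\binom{\sum_{d=1}^s(n_d-k)}{l}(-1)^l\frac{\widetilde{G}_{l+sk+1,q}^{(\alpha,h)}}{l+sk+1}=\begin{cases}[2]_q+q^{h+1}\dfrac{\widetilde{G}_{n_1+\cdots+n_s+1,q^{-1}}^{(\alpha,h)}}{n_1+\cdots+n_s+1} & \text{if } k=0,\\[2mm] \displaystyle\sum_{l=0}^{sk}\binom{sk}{l}(-1)^{sk+l}\Big\{[2]_q+q^{h+1}\frac{\widetilde{G}_{n_1+\cdots+n_s-l+1,q^{-1}}^{(\alpha,h)}}{n_1+\cdots+n_s-l+1}\Big\} & \text{if } k\neq 0.\end{cases} \]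
   Context: For $x\in\mathbb{Z}_p$ write $[x]_q=\frac{1-q^x}{1-q}$, and $[2]_q=1+q$. For a uniformly differentiable $f:\mathbb{Z}_p\to\mathbb{C}_p$, the fermionic $p$-adic $q$-integral is $\int_{\mathbb{Z}_p}f(\xi)\,d\mu_{-q}(\xi)=\lim_{N\to\infty}\frac{1}{[p^N]_{-q}}\sum_{\xi=0}^{p^N-1}f(\xi)(-q)^{\xi}$, with $[p^N]_{-q}=\frac{1+q^{p^N}}{1+q}$. The $(h,q)$-Genocchi polynomials with weight $\alpha$ are defined for $n\ge0$, $x\in\mathbb{Z}_p$ by $\frac{\widetilde{G}_{n+1,q}^{(\alpha,h)}(x)}{n+1}=\int_{\mathbb{Z}_p}q^{(h-1)\xi}[x+\xi]_{q^{\alpha}}^n\,d\mu_{-q}(\xi)$, and the numbers are $\widetilde{G}_{n,q}^{(\alpha,h)}=\widetilde{G}_{n,q}^{(\alpha,h)}(0)$. The numbers $\widetilde{G}_{n,q^{-1}}^{(\alpha,h)}$ are obtained by replacing $q$ by $q^{-1}$ everywhere: $\frac{\widetilde{G}_{n+1,q^{-1}}^{(\alpha,h)}}{n+1}=\int_{\mathbb{Z}_p}q^{(1-h)\xi}[\xi]_{q^{-\alpha}}^n\,d\mu_{-q^{-1}}(\xi)$. *)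

From HB Require Import structures.
From mathcomp Require Import all_boot all_order all_algebra.
From mathcomp Require Import reals.
From Stdlib Require Import ClassicalEpsilon.
Set Implicit Arguments. Unset Strict Implicit. Unset Printing Implicit Defensive.
Import Order.TTheory GRing.Theory Num.Theory.
Local Open Scope ring_scope.

Section PadicSetting.
Variables (R : realType) (K : fieldType) (absv : K -> R).

Definition abs_cvg (u : nat -> K) (l : K) : Prop :=
  forall e : R, 0 < e -> exists N : nat, forall m : nat, (N <= m)%N -> absv (u m - l) < e.

Definition abs_cauchy (u : nat -> K) : Prop :=
  forall e : R, 0 < e -> exists N : nat, forall m m' : nat,
    (N <= m)%N -> (N <= m')%N -> absv (u m - u m') < e.

(* absv is a non-archimedean absolute value normalised by |p| = 1/p,
   and K is complete for it.  Together with K : closedFieldType this is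
   our axiomatisation of C_p. *)
Definition is_Cp_abs (p : nat) : Prop :=
  (forall x, 0 <= absv x) /\
  (forall x, absv x = 0 <-> x = 0) /\
  (forall x y, absv (x * y) = absv x * absv y) /\
  (forall x y, absv (x + y) <= Num.max (absv x) (absv y)) /\
  absv (p%:R) = (p%:R)^-1 /\
  (forall u, abs_cauchy u -> exists l, abs_cvg u l).

Definition qnum (t : K) (x : nat) : K :=
  if t == 1 then x%:R else (1 - t ^+ x) / (1 - t).

(* fermionic p-adic q-integral:
   lim_N 1/[p^N]_{-q} * sum_{xi < p^N} f(xi) (-q)^xi,
   with [p^N]_{-q} = (1 + q^{p^N})/(1 + q). *)
Definition fermionic_int (p : nat) (q : K) (f : nat -> K) : K :=
  epsilon (inhabits 0) (fun l => abs_cvg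
    (fun N => ((1 + q ^+ (p ^ N)) / (1 + q))^-1 *
              \sum_(0 <= xi < p ^ N) f xi * (- q) ^+ xi) l).

(* (h,q)-Genocchi numbers with weight alpha:
   G_{m+1,q}/(m+1) = int q^{(h-1) xi} [xi]_{q^alpha}^m dmu_{-q}(xi).
   (G_0 is not defined by the paper; we set it to 0, it is never used.) *)
Definition qGenocchi (p alpha h : nat) (q : K) (n : nat) : K :=
  match n with
  | 0 => 0
  | m.+1 => (m.+1)%:R *
      fermionic_int p q (fun xi => q ^+ ((h - 1) * xi) * (qnum (q ^+ alpha) xi) ^+ m)
  end.

End PadicSetting.

From Stdlib Require Import ClassicalEpsilon.
From HB Require Import structures.
From mathcomp Require Import all_boot all_order all_algebra.
From mathcomp Require Import reals ring lra zify.
Set Implicit Arguments. Unset Strict Implicit. Unset Printing Implicit Defensive.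
Import Order.TTheory GRing.Theory Num.Theory.
Local Open Scope ring_scope.

(* The fermionic integral I_u(f) is the limit of the Riemann sums
   A_N(f) = [p^N]_{-u}^{-1} sum_{x < p^N} f(x) (-u)^x, which are Cauchy as soon as
   |f(x + y p^N) - f(x)| <= d^N for some d < 1 bounding |p| and |q - 1|.  Two exact
   identities for these sums carry the argument: the shift relation
   u A_N(f(. + 1)) + A_N(f) = [p^N]_{-u}^{-1} (f(0) + u^{p^N} f(p^N))
   and the reflection A_N^u(f) = A_N^{u^-1}(f(p^N - 1 - .)).  Take
   F(x) = w^x [x]_t^a (1 - [x]_t)^m  and  H(x) = w^-x [x]_{t^-1}^m (1 - [x]_{t^-1})^a
   with w = q^(h-1), t = q^alpha, m > 0.  Since [-x]_t = -t^-1 [x]_{t^-1}, F(p^N - x) is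
   within d^N of w H(x + 1), and in the limit I_q(F) = [2]_q F(0) + q^(h+1) I_{q^-1}(H).
   Expanding (1 - [x]_t)^m and (1 - [x]_{t^-1})^a binomially turns both sides into the
   Genocchi sums of the theorem (a = s k, m = S - s k); for a > 0 the [2]_q term is
   spread over the right-hand sum using sum_l binom(a, l) (-1)^l = 0. *)

Section GeometricSum.
Variable K : comPzRingType.
Implicit Types u : K.

Definition qsum u n : K := \sum_(i < n) u ^+ i.

Lemma qsum0 u : qsum u 0 = 0. Proof. by rewrite /qsum big_ord0. Qed.

Lemma qsum1 u : qsum u 1 = 1. Proof. by rewrite /qsum big_ord1 expr0. Qed.

Lemma subrX1_qsum u n : u ^+ n - 1 = (u - 1) * qsum u n.
Proof. by rewrite subrX1. Qed.

Lemma qsumD u m n : qsum u (m + n) = qsum u m + u ^+ m * qsum u n.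
Proof.
rewrite /qsum big_split_ord /= mulr_sumr; congr (_ + _).
by apply: eq_bigr => i _; rewrite exprD.
Qed.

Lemma qsumS u n : qsum u n.+1 = 1 + u * qsum u n.
Proof. by rewrite -add1n qsumD qsum1 expr1. Qed.

Lemma qsumM u a b : qsum u (a * b) = qsum u a * qsum (u ^+ a) b.
Proof.
elim: b => [|b ih]; first by rewrite muln0 !qsum0 mulr0.
rewrite mulnS qsumD ih -addn1 addnC qsumD qsum1 mulrDr mulr1; congr (_ + _).
by rewrite mulrCA.
Qed.

Lemma exprN_odd u n : odd n -> (- u) ^+ n = - u ^+ n.
Proof. by move=> hn; rewrite exprNn -signr_odd hn expr1 mulN1r. Qed.

Lemma exprN_even u n : ~~ odd n -> (- u) ^+ n = u ^+ n.
Proof. by move=> hn; rewrite exprNn -signr_odd (negbTE hn) expr0 mul1r. Qed.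

Lemma big_nat_mul_split M b (F : nat -> K) :
  \sum_(0 <= i < M * b) F i = \sum_(0 <= j < b) \sum_(0 <= i < M) F (i + j * M)%N.
Proof.
elim: b => [|b ih]; first by rewrite muln0 !big_geq.
rewrite big_nat_recr //= -ih mulnS addnC (@big_cat_nat _ _ _ (M * b)%N) ?leq_addr //=.
congr (_ + _); rewrite -{1}[(M * b)%N]add0n big_addn addKn.
by apply: eq_big_nat => i _; rewrite mulnC.
Qed.

Lemma sum_binom_sign_eq0 a : a != 0%N ->
  \sum_(0 <= i < a.+1) 'C(a, i)%:R * (-1) ^+ (a + i) = 0 :> K.
Proof.
move=> a0; have := exprBn (1 : K) 1 a; rewrite subrr expr0n (negbTE a0) => e.
rewrite big_mkord (_ : \sum_(i < a.+1) _ =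
    (-1) ^+ a * \sum_(i < a.+1) (-1) ^+ i * 1 ^+ (a - i) * 1 ^+ i *+ 'C(a, i)).
  by rewrite -e mulr0.
by rewrite mulr_sumr; apply: eq_bigr => i _; rewrite !expr1n !mulr1 -mulr_natl exprD; ring.
Qed.

End GeometricSum.

Section QNumber.
Variable K : fieldType.
Implicit Types u : K.

Lemma qnumE u n : qnum u n = qsum u n.
Proof.
rewrite /qnum /qsum; have [->|u1] := eqVneq u 1.
  by under eq_bigr do rewrite expr1n; rewrite sumr_const card_ord.
have u1' : 1 - u != 0 by rewrite subr_eq0 eq_sym.
apply: (mulIf u1'); rewrite divfK //.
by rewrite -opprB subrX1 mulrC -mulrN opprB.
Qed.

Lemma exprn_qsumV u n : u != 0 -> u ^+ n * qsum u^-1 n = u * qsum u n.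
Proof.
move=> u0; elim: n => [|n ih]; first by rewrite !qsum0 !mulr0.
rewrite qsumS -addn1 qsumD qsum1 mulr1 addn1 mulrDr mulr1 exprS.
by rewrite mulrDr -ih; field.
Qed.

End QNumber.

Section NonArchimedean.
Variables (R : realType) (K : fieldType) (absv : K -> R).
Hypothesis abs_ge0 : forall x, 0 <= absv x.
Hypothesis abs_eq0 : forall x, absv x = 0 <-> x = 0.
Hypothesis absM : forall x y, absv (x * y) = absv x * absv y.
Hypothesis absD : forall x y, absv (x + y) <= Num.max (absv x) (absv y).

Lemma abs0 : absv 0 = 0. Proof. exact: (proj2 (abs_eq0 0) erefl). Qed.

Lemma absD_le x y B : absv x <= B -> absv y <= B -> absv (x + y) <= B.
Proof. by move=> hx hy; apply: le_trans (absD x y) _; rewrite ge_max hx hy. Qed.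

Lemma abs1 : absv 1 = 1.
Proof.
have h1 : absv 1 != 0 by apply/eqP => /abs_eq0 /eqP; rewrite oner_eq0.
by apply: (mulfI h1); rewrite -absM !mulr1.
Qed.

Lemma absN1 : absv (-1) = 1.
Proof.
have e : absv (-1) * absv (-1) = 1 by rewrite -absM mulrNN mulr1 abs1.
have := abs_ge0 (-1); nra.
Qed.

Lemma absN x : absv (- x) = absv x.
Proof. by rewrite -mulN1r absM absN1 mul1r. Qed.

Lemma absB_le x y B : absv x <= B -> absv y <= B -> absv (x - y) <= B.
Proof. by move=> hx hy; apply: absD_le; rewrite ?absN. Qed.

Lemma absX x n : absv (x ^+ n) = absv x ^+ n.
Proof. by elim: n => [|n ih]; rewrite ?expr0 ?abs1 // !exprS absM ih. Qed.

Lemma absV x : absv x^-1 = (absv x)^-1.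
Proof.
have [->|x0] := eqVneq x 0; first by rewrite invr0 abs0 invr0.
have ax : absv x != 0 by apply/eqP => /abs_eq0; apply/eqP.
by apply: (mulfI ax); rewrite -absM !divff // abs1.
Qed.

Lemma abs_sum_le (I : Type) (r : seq I) (P : pred I) (F : I -> K) B :
  0 <= B -> (forall i, P i -> absv (F i) <= B) -> absv (\sum_(i <- r | P i) F i) <= B.
Proof.
move=> hB hF; apply: (big_ind (fun x => absv x <= B)) => //; first by rewrite abs0.
by move=> x y; apply: absD_le.
Qed.

Lemma abs_natr_le1 n : absv n%:R <= 1.
Proof.
elim: n => [|n ih]; first by rewrite abs0.
by rewrite -addn1 natrD; apply: absD_le; rewrite ?abs1.
Qed.

Lemma abs_qsum_le1 u n : absv u <= 1 -> absv (qsum u n) <= 1.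
Proof. by move=> hu; apply: abs_sum_le => // i _; rewrite absX exprn_ile1. Qed.

Lemma absDl_eq x y : absv y < absv x -> absv (x + y) = absv x.
Proof.
move=> hlt; apply/eqP; rewrite eq_le (absD_le (lexx _) (ltW hlt)) /=.
have := absD (x + y) (- y); rewrite addrK absN le_max => /orP [] // h.
by move: (lt_le_trans hlt h); rewrite ltxx.
Qed.

Lemma absXB_le a b n : absv a <= 1 -> absv b <= 1 -> absv (a ^+ n - b ^+ n) <= absv (a - b).
Proof.
move=> ha hb; case: n => [|n]; first by rewrite subrr abs0.
rewrite subrXX absM -[X in _ <= X]mulr1; apply: ler_wpM2l => //.
apply: abs_sum_le => // i _; rewrite absM !absX.
by apply: mulr_ile1; rewrite ?exprn_ge0 ?exprn_ile1.
Qed.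

Lemma absM3B_le (a1 a2 a3 b1 b2 b3 : K) B :
  absv a1 <= 1 -> absv a2 <= 1 -> absv a3 <= 1 ->
  absv b1 <= 1 -> absv b2 <= 1 -> absv b3 <= 1 ->
  absv (a1 - b1) <= B -> absv (a2 - b2) <= B -> absv (a3 - b3) <= B ->
  absv (a1 * a2 * a3 - b1 * b2 * b3) <= B.
Proof.
move=> ha1 ha2 ha3 hb1 hb2 hb3 h1 h2 h3.
have -> : a1 * a2 * a3 - b1 * b2 * b3 =
  (a1 - b1) * (a2 * a3) + (b1 * a3) * (a2 - b2) + (b1 * b2) * (a3 - b3) by ring.
have le1M x y : absv x <= 1 -> absv y <= 1 -> absv (x * y) <= 1.
  by move=> hx hy; rewrite absM mulr_ile1.
apply: absD_le; first apply: absD_le; rewrite absM.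
- by rewrite -[B]mulr1 ler_pM ?le1M.
- by rewrite -[B]mul1r ler_pM ?le1M.
- by rewrite -[B]mul1r ler_pM ?le1M.
Qed.

Lemma cvg_uniq u l1 l2 : abs_cvg absv u l1 -> abs_cvg absv u l2 -> l1 = l2.
Proof.
move=> h1 h2; apply/eqP; rewrite -subr_eq0; apply/eqP; apply/abs_eq0.
apply/eqP; rewrite eq_le abs_ge0 andbT leNgt; apply/negP => hlt.
have [N1 H1] := h1 _ hlt; have [N2 H2] := h2 _ hlt; set M := maxn N1 N2.
have : absv (l1 - l2) < absv (l1 - l2).
  have e : l1 - l2 = (u M - l2) - (u M - l1) by ring.
  rewrite {1}e; apply: le_lt_trans (absD _ _) _; rewrite gt_max absN.
  by apply/andP; split; [apply: H2 | apply: H1]; rewrite ?leq_maxl ?leq_maxr.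
by rewrite ltxx.
Qed.

Lemma cvg_ext u v l : abs_cvg absv u l -> u =1 v -> abs_cvg absv v l.
Proof. by move=> h e x x0; have [N HN] := h x x0; exists N => m hm; rewrite -e HN. Qed.

Lemma cvg_cst c : abs_cvg absv (fun _ => c) c.
Proof. by move=> x x0; exists 0%N => m _; rewrite subrr abs0. Qed.

Lemma cvgD u v a b : abs_cvg absv u a -> abs_cvg absv v b ->
  abs_cvg absv (fun N => u N + v N) (a + b).
Proof.
move=> hu hv x x0; have [N1 H1] := hu x x0; have [N2 H2] := hv x x0.
exists (maxn N1 N2) => m; rewrite geq_max => /andP [hm1 hm2].
have -> : u m + v m - (a + b) = (u m - a) + (v m - b) by ring.
by apply: le_lt_trans (absD _ _) _; rewrite gt_max H1 ?H2.
Qed.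

Lemma cvgZ c u a : absv c <= 1 -> abs_cvg absv u a ->
  abs_cvg absv (fun N => c * u N) (c * a).
Proof.
move=> hc hu x x0; have [N H] := hu x x0; exists N => m hm.
rewrite -mulrBr absM; apply: le_lt_trans (H m hm).
by rewrite -[X in _ <= X]mul1r; apply: ler_wpM2r.
Qed.

Lemma cvg_sum (I : Type) (r : seq I) (F : I -> nat -> K) (L : I -> K) :
  (forall i, abs_cvg absv (F i) (L i)) ->
  abs_cvg absv (fun N => \sum_(i <- r) F i N) (\sum_(i <- r) L i).
Proof.
move=> h; elim: r => [|i r ih].
  by rewrite big_nil; apply: (cvg_ext (cvg_cst 0)) => N; rewrite big_nil.
by rewrite big_cons; apply: (cvg_ext (cvgD (h i) ih)) => N; rewrite big_cons.
Qed.

Variable p : nat.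
Hypotheses (Hp : prime p) (absp : absv p%:R = p%:R^-1).

Lemma absp_lt1 : absv p%:R < 1.
Proof. by rewrite absp invf_lt1 ?ltr0n ?prime_gt0 // ltr1n prime_gt1. Qed.

Lemma natr_neq0 n : (0 < n)%N -> n%:R != 0 :> K.
Proof.
move=> n0; apply/eqP => hn.
have [m cpm em] := pfactor_coprime Hp n0.
have p0 : p%:R != 0 :> K.
  apply/eqP => /(f_equal absv); rewrite absp abs0 => /eqP.
  by rewrite invr_eq0 pnatr_eq0 gtn_eqF ?prime_gt0.
have hm : m%:R = 0 :> K.
  by move/eqP: hn; rewrite em natrM natrX mulf_eq0 expf_eq0 (negbTE p0) andbF orbF => /eqP.
have m0 : (0 < m)%N by rewrite lt0n; apply/eqP => m0; move: n0; rewrite em m0.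
have [a _] := Bezoutl p m0; rewrite gcdnC (eqP cpm) => /dvdnP [c hc].
have e : 1 = - (a%:R * p%:R) :> K.
  apply/eqP; rewrite -addr_eq0; apply/eqP.
  have : (1 + a * p)%:R = 0 :> K by rewrite hc natrM hm mulr0.
  by rewrite natrD natrM.
have : absv 1 < 1.
  rewrite e absN absM; apply: le_lt_trans absp_lt1.
  by rewrite -[X in _ <= X]mul1r ler_wpM2r ?abs_natr_le1.
by rewrite abs1 ltxx.
Qed.

Hypothesis Hodd : odd p.

(* 2 is a p-adic unit because p = 1 + 2 * (p %/ 2) with |p| < 1. *)
Lemma abs_natr2 : absv 2%:R = 1.
Proof.
apply/eqP; rewrite eq_le abs_natr_le1 /= leNgt; apply/negP => h2.
have e : 1 = p%:R - (p./2)%:R * 2%:R :> K.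
  by rewrite -{1}(odd_double_half p) Hodd natrD -muln2 natrM addrK.
have : absv 1 < 1.
  rewrite e; apply: le_lt_trans (absD _ _) _; rewrite gt_max absp_lt1 absN absM /=.
  by apply: le_lt_trans h2; rewrite -[X in _ <= X]mul1r ler_wpM2r ?abs_natr_le1.
by rewrite abs1 ltxx.
Qed.

Variable d : R.
Hypotheses (hpd : absv p%:R <= d) (hd1 : d < 1).

Lemma d_ge0 : 0 <= d. Proof. exact: le_trans (abs_ge0 _) hpd. Qed.

Definition near_one u := absv (u - 1) <= d.

Lemma near_one_abs u : near_one u -> absv u = 1.
Proof.
move=> hu; have h : absv (u - 1) < absv 1 by rewrite abs1 (le_lt_trans hu hd1).
by rewrite -abs1 -(absDl_eq h) addrC subrK.
Qed.

Lemma near_one_abs1D u : near_one u -> absv (1 + u) = 1.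
Proof.
move=> hu; have h : absv (u - 1) < absv 2%:R by rewrite abs_natr2 (le_lt_trans hu hd1).
by rewrite -abs_natr2 -(absDl_eq h); congr absv; ring.
Qed.

Lemma abs1_neq0 x : absv x = 1 -> x != 0.
Proof.
by move=> hx; apply/eqP => x0; move: hx; rewrite x0 abs0 => /eqP; rewrite eq_sym oner_eq0.
Qed.

Lemma near_one_neq0 u : near_one u -> u != 0.
Proof. by move/near_one_abs/abs1_neq0. Qed.

Lemma near_one_1D_neq0 u : near_one u -> 1 + u != 0.
Proof. by move/near_one_abs1D/abs1_neq0. Qed.

Lemma near_oneX u n : near_one u -> near_one (u ^+ n).
Proof.
move=> hu; rewrite /near_one subrX1_qsum absM -[d]mulr1.
by rewrite ler_pM ?abs_ge0 ?abs_qsum_le1 ?(near_one_abs hu).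
Qed.

Lemma near_oneV u : near_one u -> near_one u^-1.
Proof.
move=> hu; have u0 := near_one_neq0 hu; rewrite /near_one.
have -> : u^-1 - 1 = - u^-1 * (u - 1) by field.
by rewrite absM absN absV (near_one_abs hu) invr1 mul1r.
Qed.

Lemma abs_qsum_p_le u : near_one u -> absv (qsum u p) <= d.
Proof.
move=> hu; have -> : qsum u p = \sum_(i < p) (u ^+ i - 1) + p%:R.
  by rewrite sumrB sumr_const card_ord subrK.
apply: absD_le => //; apply: abs_sum_le => [|i _]; first exact: d_ge0.
exact: near_oneX.
Qed.

Lemma abs_qsum_expn_le N u : near_one u -> absv (qsum u (p ^ N)) <= d ^+ N.
Proof.
elim: N u => [|N ih] u hu; first by rewrite expn0 qsum1 abs1.
by rewrite expnS qsumM absM exprS ler_pM ?abs_ge0 ?d_ge0 ?abs_qsum_p_le ?ih ?near_oneX.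
Qed.

Lemma abs_qsum_mul_expn_le N y u : near_one u -> absv (qsum u (y * p ^ N)) <= d ^+ N.
Proof.
move=> hu; rewrite mulnC qsumM absM -[d ^+ N]mulr1.
by rewrite ler_pM ?abs_ge0 ?abs_qsum_expn_le ?abs_qsum_le1 // absX (near_one_abs hu) expr1n.
Qed.

Lemma abs_subX_mul_expn_le N y u : near_one u -> absv (u ^+ (y * p ^ N) - 1) <= d ^+ N.
Proof.
move=> hu; rewrite subrX1_qsum absM -[d ^+ N]mul1r.
by rewrite ler_pM ?abs_ge0 ?abs_qsum_mul_expn_le ?(le_trans hu (ltW hd1)).
Qed.

Lemma bernoulli_ineq (c : R) N : 0 <= c -> 1 + N%:R * c <= (1 + c) ^+ N.
Proof.
move=> c0; elim: N => [|N ih]; first by rewrite mul0r addr0 expr0.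
rewrite exprS -natr1 mulrDl mul1r.
have h1 : 0 <= (1 + c) ^+ N by apply: exprn_ge0; lra.
have h2 : 0 <= N%:R * c by apply: mulr_ge0.
nra.
Qed.

Lemma exprd_small e : 0 < e -> exists N, d ^+ N < e.
Proof.
move=> e0; have [->|dpos] := eqVneq d 0; first by exists 1%N; rewrite expr1.
have dp : 0 < d by rewrite lt_def dpos d_ge0.
set c := d^-1 - 1; have c0 : 0 < c by rewrite /c subr_gt0 invf_gt1.
set B := e^-1 / c; have B0 : 0 <= B by rewrite /B divr_ge0 // ?invr_ge0 ltW.
exists (Num.Def.archi_bound B); set N := Num.Def.archi_bound B.
have hN : B < N%:R := archi_boundP B0.
have e1 : d ^+ N = ((1 + c) ^+ N)^-1 by rewrite /c addrC subrK exprVn invrK.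
rewrite e1 -[e]invrK ltf_pV2 ?posrE ?invr_gt0 ?exprn_gt0 //; last by lra.
apply: lt_le_trans (bernoulli_ineq N (ltW c0)).
have : e^-1 < N%:R * c by rewrite -ltr_pdivrMr.
lra.
Qed.

Lemma cvg_near u v l : (forall N, absv (u N - v N) <= d ^+ N) ->
  abs_cvg absv u l -> abs_cvg absv v l.
Proof.
move=> huv hu x x0; have [N1 H1] := hu x x0; have [N2 H2] := exprd_small x0.
exists (maxn N1 N2) => m; rewrite geq_max => /andP [hm1 hm2].
have -> : v m - l = (u m - l) - (u m - v m) by ring.
apply: le_lt_trans (absD _ _) _; rewrite gt_max absN H1 //=.
apply: le_lt_trans (huv m) _; apply: le_lt_trans H2.
by rewrite ler_wiXn2l ?d_ge0 ?(ltW hd1).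
Qed.

Hypothesis complete : forall u, abs_cauchy absv u -> exists l, abs_cvg absv u l.

Lemma cvg_geometric_cauchy u : (forall N, absv (u N.+1 - u N) <= d ^+ N) ->
  exists l, abs_cvg absv u l.
Proof.
move=> hs; apply: complete.
have gen N j : absv (u (N + j)%N - u N) <= d ^+ N.
  elim: j => [|j ih]; first by rewrite addn0 subrr abs0 exprn_ge0 ?d_ge0.
  have -> : u (N + j.+1)%N - u N = (u (N + j).+1 - u (N + j)%N) + (u (N + j)%N - u N).
    by rewrite addnS; ring.
  apply: absD_le => //; apply: le_trans (hs _) _.
  by rewrite ler_wiXn2l ?d_ge0 ?(ltW hd1) ?leq_addr.
move=> x x0; have [N HN] := exprd_small x0; exists N => m m' hm hm'.
have -> : u m - u m' = (u m - u N) - (u m' - u N) by ring.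
apply: le_lt_trans (absD _ _) _; rewrite gt_max absN.
by rewrite -(subnKC hm) -(subnKC hm') !(le_lt_trans (gen _ _)).
Qed.

Lemma odd_expn_p N : odd (p ^ N). Proof. by rewrite oddX Hodd orbT. Qed.

Lemma expn_p_gt0 N : (0 < p ^ N)%N. Proof. by rewrite expn_gt0 prime_gt0. Qed.

Definition alt_sum u (f : nat -> K) M := \sum_(0 <= xi < M) f xi * (- u) ^+ xi.

Definition rsum_scale (u : K) N := ((1 + u ^+ (p ^ N)) / (1 + u))^-1.

(* The sequence whose limit defines [fermionic_int absv p u f]. *)
Definition rsum u f N := rsum_scale u N * alt_sum u f (p ^ N).

Definition regular (f : nat -> K) :=
  (forall x, absv (f x) <= 1) /\
  (forall N x y, absv (f (x + y * p ^ N)%N - f x) <= d ^+ N).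

Lemma rsum_ext u f g N : f =1 g -> rsum u f N = rsum u g N.
Proof. by move=> e; rewrite /rsum /alt_sum; under eq_bigr do rewrite e. Qed.

Lemma rsumZ u c f N : rsum u (fun x => c * f x) N = c * rsum u f N.
Proof.
rewrite /rsum /alt_sum mulrCA; congr (_ * _).
by rewrite mulr_sumr; apply: eq_bigr => i _; rewrite mulrA.
Qed.

Lemma rsum_sum (I : Type) (r : seq I) u (F : I -> nat -> K) N :
  rsum u (fun x => \sum_(i <- r) F i x) N = \sum_(i <- r) rsum u (F i) N.
Proof.
rewrite /rsum /alt_sum -mulr_sumr; congr (_ * _).
by rewrite exchange_big /=; apply: eq_bigr => xi _; rewrite mulr_suml.
Qed.

Lemma abs_rsum_scale u N : near_one u -> absv (rsum_scale u N) = 1.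
Proof.
move=> hu; rewrite /rsum_scale absV absM absV (near_one_abs1D hu) (near_one_abs1D (near_oneX _ hu)).
by rewrite invr1 mulr1 invr1.
Qed.

Lemma rsumB_le u f g N B : near_one u ->
  (forall x, (x < p ^ N)%N -> absv (f x - g x) <= B) ->
  absv (rsum u f N - rsum u g N) <= B.
Proof.
move=> hu h; have B0 : 0 <= B := le_trans (abs_ge0 _) (h 0%N (expn_p_gt0 N)).
rewrite /rsum -mulrBr absM abs_rsum_scale // mul1r /alt_sum -sumrB big_nat.
apply: abs_sum_le => // i /andP [_ hi].
by rewrite -mulrBl absM absX absN (near_one_abs hu) expr1n mulr1 h.
Qed.

Lemma rsum_step u f N : near_one u -> regular f ->
  absv (rsum u f N.+1 - rsum u f N) <= d ^+ N.
Proof.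
move=> hu [f1 fc]; set M := (p ^ N)%N; set v := u ^+ M.
have hv : near_one v := near_oneX M hu.
set S := \sum_(0 <= j < p) (- v) ^+ j.
have eS : 1 + v ^+ p = (1 + v) * S.
  have eS' : S = \sum_(i < p) (- v) ^+ i by rewrite /S big_mkord.
  have := subrX1 (- v) p; rewrite -eS' exprN_odd // => e.
  have -> : (1 + v) * S = - ((- v - 1) * S) by ring.
  by rewrite -e; ring.
have hS : absv S = 1.
  move: (f_equal absv eS); rewrite absM near_one_abs1D ?near_oneX //.
  by rewrite near_one_abs1D // mul1r.
have S0 := abs1_neq0 hS.
have u0 := near_one_1D_neq0 hu; have v0 := near_one_1D_neq0 hv.
(* Split [0, p^(N+1)) into p blocks of length p^N. *)
have eT : alt_sum u f (p ^ N.+1) - alt_sum u f M * S =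
    \sum_(0 <= j < p) \sum_(0 <= i < M)
       (f (i + j * M)%N - f i) * (- u) ^+ i * (- v) ^+ j.
  rewrite /alt_sum expnSr big_nat_mul_split big_distrr /= -sumrB.
  apply: eq_big_nat => j _; rewrite big_distrl /= -sumrB; apply: eq_big_nat => i _.
  rewrite exprD (mulnC j M) exprM (exprN_odd u (odd_expn_p N)) -/v.
  by move: (f (i + M * j)%N) (f i) ((- u) ^+ i) ((- v) ^+ j) => a b c e; ring.
have -> : rsum u f N.+1 - rsum u f N =
    (1 + u) / ((1 + v) * S) * (alt_sum u f (p ^ N.+1) - alt_sum u f M * S).
  by rewrite /rsum /rsum_scale expnSr exprM -/M -/v eS; field; rewrite S0 v0 u0.
rewrite absM absM absV absM hS (near_one_abs1D hu) (near_one_abs1D hv) !mulr1 invr1 !mul1r.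
rewrite eT; apply: abs_sum_le => [|j _]; first by rewrite exprn_ge0 ?d_ge0.
apply: abs_sum_le => [|i _]; first by rewrite exprn_ge0 ?d_ge0.
by rewrite !absM !absX !absN (near_one_abs hu) (near_one_abs hv) !expr1n !mulr1 fc.
Qed.

Lemma fermionic_intE u f l : abs_cvg absv (rsum u f) l -> fermionic_int absv p u f = l.
Proof.
move=> hl; rewrite /fermionic_int.
exact: cvg_uniq (epsilon_spec (inhabits 0) (abs_cvg absv (rsum u f)) (ex_intro _ l hl)) hl.
Qed.

Lemma fermionic_int_cvg u f : near_one u -> regular f ->
  abs_cvg absv (rsum u f) (fermionic_int absv p u f).
Proof.
move=> hu hf; have [l hl] := cvg_geometric_cauchy (fun N => rsum_step N hu hf).
by rewrite (fermionic_intE hl).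
Qed.

Lemma regular_eq f g : f =1 g -> regular f -> regular g.
Proof. by move=> e [f1 fc]; split => [x|N x y]; rewrite -!e. Qed.

Lemma regularM f g : regular f -> regular g -> regular (fun x => f x * g x).
Proof.
move=> [f1 fc] [g1 gc]; split => [x|N x y]; first by rewrite absM mulr_ile1 ?abs_ge0.
set x' := (x + y * p ^ N)%N.
have -> : f x' * g x' - f x * g x = f x' * (g x' - g x) + (f x' - f x) * g x by ring.
apply: absD_le; rewrite absM.
- by rewrite -[d ^+ N]mul1r ler_pM ?abs_ge0 ?f1 ?gc.
- by rewrite -[d ^+ N]mulr1 ler_pM ?abs_ge0 ?fc ?g1.
Qed.

Lemma regularX f n : regular f -> regular (fun x => f x ^+ n).
Proof.
move=> hf; elim: n => [|n ih].
  by split=> [x|N x y]; rewrite ?abs1 // subrr abs0 exprn_ge0 ?d_ge0.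
by apply: regular_eq (regularM hf ih) => x; rewrite exprS.
Qed.

Lemma regular1B f : regular f -> regular (fun x => 1 - f x).
Proof.
move=> [f1 fc]; split => [x|N x y]; first by rewrite absB_le ?abs1.
by rewrite (_ : _ - _ = - (f (x + y * p ^ N)%N - f x)) ?absN //; ring.
Qed.

Lemma regular_expr u : near_one u -> regular (fun x => u ^+ x).
Proof.
move=> hu; split => [x|N x y]; first by rewrite absX (near_one_abs hu) expr1n.
rewrite exprD -{2}[u ^+ x]mulr1 -mulrBr absM absX (near_one_abs hu) expr1n mul1r.
exact: abs_subX_mul_expn_le.
Qed.

Lemma regular_qsum u : near_one u -> regular (qsum u).
Proof.
move=> hu; split => [x|N x y]; first by rewrite abs_qsum_le1 ?(near_one_abs hu).
rewrite qsumD addrAC subrr add0r absM absX (near_one_abs hu) expr1n mul1r.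
exact: abs_qsum_mul_expn_le.
Qed.

Lemma alt_sum_shift u g M : odd M ->
  u * alt_sum u (fun x => g x.+1) M + alt_sum u g M = g 0%N + g M * u ^+ M.
Proof.
move=> hM.
have e1 : \sum_(0 <= x < M.+1) g x * (- u) ^+ x = alt_sum u g M + g M * (- u) ^+ M.
  by rewrite big_nat_recr.
have e2 : \sum_(0 <= x < M.+1) g x * (- u) ^+ x =
    g 0%N + \sum_(0 <= x < M) g x.+1 * (- u) ^+ x.+1.
  by rewrite big_nat_recl // expr0 mulr1.
have -> : u * alt_sum u (fun x => g x.+1) M = - \sum_(0 <= x < M) g x.+1 * (- u) ^+ x.+1.
  by rewrite /alt_sum mulr_sumr -sumrN; apply: eq_big_nat => i _; rewrite exprS; ring.
have <- : alt_sum u g M + g M * (- u) ^+ M - g 0%N =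
    \sum_(0 <= x < M) g x.+1 * (- u) ^+ x.+1 by rewrite -e1 e2 addrC addKr.
by rewrite exprN_odd //; ring.
Qed.

Lemma rsum_shift u g N :
  u * rsum u (fun x => g x.+1) N + rsum u g N =
  rsum_scale u N * (g 0%N + g (p ^ N)%N * u ^+ (p ^ N)).
Proof. by rewrite /rsum -alt_sum_shift ?odd_expn_p //; ring. Qed.

Lemma alt_sum_reflect u g m : u != 0 -> ~~ odd m ->
  alt_sum u g m.+1 = u ^+ m * alt_sum u^-1 (fun x => g (m - x)%N) m.+1.
Proof.
move=> u0 hm; rewrite /alt_sum big_nat_rev /= mulr_sumr.
apply: eq_big_nat => i /andP [_ hi].
rewrite add0n subSS exprB // ?unitfE ?oppr_eq0 // (exprN_even u hm) -exprVn invrN; ring.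
Qed.

Lemma rsum_reflect u g N : near_one u ->
  rsum u g N = rsum u^-1 (fun x => g ((p ^ N).-1 - x)%N) N.
Proof.
move=> hu; have u0 := near_one_neq0 hu.
have hM : (p ^ N = ((p ^ N).-1).+1)%N by rewrite prednK // expn_p_gt0.
set m := (p ^ N).-1 in hM *.
have hm : ~~ odd m by have := odd_expn_p N; rewrite hM.
rewrite /rsum /rsum_scale hM alt_sum_reflect // mulrA; congr (_ * _).
have h1 := near_one_1D_neq0 hu.
have h2 := near_one_1D_neq0 (near_oneX m.+1 hu).
have h3 := near_one_1D_neq0 (near_oneV hu).
have h4 := near_one_1D_neq0 (near_oneX m.+1 (near_oneV hu)).
move: h2 h4; rewrite exprVn !exprS => h2 h4.
have h1' : u + 1 != 0 by rewrite addrC.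
have h2' : u * u ^+ m + 1 != 0 by rewrite addrC.
by field; rewrite u0 h1' expf_neq0 // h2'.
Qed.

Lemma abs_qsum_reflect_le N x y t : near_one t -> (y + x = p ^ N)%N ->
  absv (qsum t y + t^-1 * qsum t^-1 x) <= d ^+ N.
Proof.
move=> ht eM; have t0 := near_one_neq0 ht.
have -> : qsum t y + t^-1 * qsum t^-1 x =
    qsum t (p ^ N)%N - (t ^+ (p ^ N) - 1) * (t^-1 * qsum t^-1 x).
  have ex : qsum t x = t^-1 * (t ^+ x * qsum t^-1 x) by rewrite exprn_qsumV // mulKf.
  by rewrite -eM qsumD exprD ex; field.
apply: absB_le; first exact: abs_qsum_expn_le.
rewrite absM -[d ^+ N]mulr1 ler_pM ?abs_ge0 //.
  by rewrite -(mul1n (p ^ N)%N) abs_subX_mul_expn_le.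
by rewrite absM (near_one_abs (near_oneV ht)) mul1r abs_qsum_le1 ?(near_one_abs (near_oneV ht)).
Qed.

Lemma abs_expr_reflect_le N x y w : near_one w -> (y + x = p ^ N)%N ->
  absv (w ^+ y - w^-1 ^+ x) <= d ^+ N.
Proof.
move=> hw eM; have w0 := near_one_neq0 hw.
have -> : w ^+ y - w^-1 ^+ x = w^-1 ^+ x * (w ^+ (p ^ N) - 1).
  by rewrite -eM exprD exprVn; field; rewrite expf_neq0.
rewrite absM absX (near_one_abs (near_oneV hw)) expr1n mul1r.
by rewrite -(mul1n (p ^ N)%N) abs_subX_mul_expn_le.
Qed.

Section Symmetry.
Variables (q w t : K) (a m : nat).
Hypotheses (hq : near_one q) (hw : near_one w) (ht : near_one t) (hm : (0 < m)%N).

Definition Fam x := w ^+ x * qsum t x ^+ a * (1 - qsum t x) ^+ m.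

Definition Ham x := w^-1 ^+ x * qsum t^-1 x ^+ m * (1 - qsum t^-1 x) ^+ a.

Lemma regular_Fam : regular Fam.
Proof.
exact: regularM (regularM (regular_expr hw) (regularX a (regular_qsum ht)))
  (regularX m (regular1B (regular_qsum ht))).
Qed.

Lemma regular_Ham : regular Ham.
Proof.
have ht' := near_oneV ht.
exact: regularM (regularM (regular_expr (near_oneV hw)) (regularX m (regular_qsum ht')))
  (regularX a (regular1B (regular_qsum ht'))).
Qed.

Lemma Fam0 : Fam 0 = (a == 0%N)%:R.
Proof. by rewrite /Fam qsum0 subr0 expr1n expr0 mul1r mulr1 expr0n. Qed.

Lemma Ham0 : Ham 0 = 0.
Proof. by rewrite /Ham qsum0 expr0n /= eqn0Ngt hm mulr0 mul0r. Qed.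

Lemma Fam_reflect_near N x : (x < p ^ N)%N ->
  absv (Fam ((p ^ N).-1 - x)%N.+1 - w * Ham x.+1) <= d ^+ N.
Proof.
move=> hx; have hxN : (x <= (p ^ N).-1)%N by rewrite -ltnS prednK ?expn_p_gt0.
rewrite -subSn // prednK ?expn_p_gt0 //; set y := (p ^ N - x)%N.
have eM : (y + x = p ^ N)%N by rewrite subnK // ltnW.
have w0 := near_one_neq0 hw; have t0 := near_one_neq0 ht.
have ht' := near_one_abs (near_oneV ht); have hw' := near_one_abs (near_oneV hw).
set Q := t^-1 * qsum t^-1 x.
have hQ : absv Q <= 1 by rewrite absM ht' mul1r abs_qsum_le1 ?ht'.
have -> : w * Ham x.+1 = w^-1 ^+ x * (- Q) ^+ a * (1 + Q) ^+ m.
  rewrite /Ham qsumS exprS (_ : 1 - (1 + t^-1 * _) = - Q) /Q; last by ring.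
  by field.
have hty : absv (qsum t y) <= 1 by rewrite abs_qsum_le1 ?(near_one_abs ht).
have hQy : absv (qsum t y - - Q) <= d ^+ N by rewrite opprK abs_qsum_reflect_le.
have hNQ : absv (- Q) <= 1 by rewrite absN.
have h1y : absv (1 - qsum t y) <= 1 by rewrite absB_le ?abs1.
have h1Q : absv (1 + Q) <= 1 by rewrite absD_le ?abs1.
have le1X z n : absv z <= 1 -> absv (z ^+ n) <= 1 by move=> hz; rewrite absX exprn_ile1.
apply: absM3B_le; rewrite ?le1X ?absX ?(near_one_abs hw) ?hw' ?expr1n //.
- exact: abs_expr_reflect_le.
- exact: le_trans (absXB_le _ hty hNQ) hQy.
- apply: le_trans (absXB_le _ h1y h1Q) _.
  by rewrite (_ : _ - _ = - (qsum t y - - Q)) ?absN //; ring.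
Qed.

Lemma rsum_Fam_near N :
  absv (rsum q Fam N - ((1 + q) * Fam 0 + q ^+ 2 * w * rsum q^-1 Ham N)) <= d ^+ N.
Proof.
set M := (p ^ N)%N; set D := rsum_scale q N; set D' := rsum_scale q^-1 N.
set G := rsum q^-1 (fun x => Fam ((p ^ N).-1 - x)%N.+1) N.
set Z := rsum q^-1 (fun x => Ham x.+1) N; set Y := rsum q^-1 Ham N.
have hq' := near_oneV hq; have q0 := near_one_neq0 hq.
have hGZ : absv (G - w * Z) <= d ^+ N.
  by rewrite /Z -rsumZ; apply: rsumB_le => // x hx; exact: Fam_reflect_near.
have eF : rsum q Fam N = D * (Fam 0 + Fam M * q ^+ M) - q * G.
  have := rsum_shift q Fam N; rewrite -/M -/D (rsum_reflect _ _ hq) -/G => <-; ring.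
have eZ : Z = q * (D' * (Ham M * q^-1 ^+ M) - Y).
  by have := rsum_shift q^-1 Ham N; rewrite -/M -/D' -/Z -/Y Ham0 add0r => <-; field.
have -> : rsum q Fam N - ((1 + q) * Fam 0 + q ^+ 2 * w * Y) =
    (D * (Fam 0 + Fam M * q ^+ M) - (1 + q) * Fam 0) - q * (G - w * Z)
    - q ^+ 2 * w * (D' * (Ham M * q^-1 ^+ M)) by rewrite eF eZ; ring.
have [_ Fc] := regular_Fam; have [_ Hc] := regular_Ham.
have hqM := near_oneX M hq.
apply: absB_le; first apply: absB_le.
- have -> : D * (Fam 0 + Fam M * q ^+ M) - (1 + q) * Fam 0 =
      (1 + q) / (1 + q ^+ M) * q ^+ M * (Fam (0 + 1 * p ^ N)%N - Fam 0).
    rewrite add0n mul1n /D /rsum_scale; field.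
    by rewrite near_one_1D_neq0 ?near_one_1D_neq0.
  rewrite !absM absV (near_one_abs1D hq) (near_one_abs1D hqM) absX (near_one_abs hq).
  by rewrite invr1 expr1n !mul1r Fc.
- by rewrite absM (near_one_abs hq) mul1r.
- have := Hc N 0%N 1%N; rewrite add0n mul1n Ham0 subr0.
  rewrite !absM !absX (near_one_abs hq) (near_one_abs hw) (near_one_abs hq').
  by rewrite abs_rsum_scale // !expr1n !mul1r mulr1.
Qed.

Lemma fermionic_int_Fam :
  fermionic_int absv p q Fam =
  (1 + q) * Fam 0 + q ^+ 2 * w * fermionic_int absv p q^-1 Ham.
Proof.
set c := q ^+ 2 * w.
have hc : absv (- c) <= 1.
  by rewrite absN absM absX (near_one_abs hq) (near_one_abs hw) expr1n mulr1.
have cvg_diff := cvgD (fermionic_int_cvg hq regular_Fam)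
  (cvgZ hc (fermionic_int_cvg (near_oneV hq) regular_Ham)).
have cvg_bdry : abs_cvg absv (fun N => rsum q Fam N + - c * rsum q^-1 Ham N)
    ((1 + q) * Fam 0).
  apply: cvg_near (cvg_cst _) => N; rewrite -absN.
  by rewrite (_ : - _ = rsum q Fam N - ((1 + q) * Fam 0 + c * rsum q^-1 Ham N))
    ?rsum_Fam_near //; ring.
by have := cvg_uniq cvg_diff cvg_bdry => <-; ring.
Qed.

End Symmetry.

Definition genocchi_kernel (u : K) alpha e j xi :=
  u ^+ (e * xi) * qnum (u ^+ alpha) xi ^+ j.

Lemma qGenocchiE u alpha h j :
  qGenocchi absv p alpha h u j.+1 / j.+1%:R =
  fermionic_int absv p u (genocchi_kernel u alpha (h - 1) j).
Proof. by rewrite /qGenocchi mulrC mulrA mulVf ?natr_neq0 // mul1r. Qed.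

Lemma regular_genocchi_kernel u alpha e j : near_one u ->
  regular (genocchi_kernel u alpha e j).
Proof.
move=> hu; apply: regular_eq
  (regularM (regular_expr (near_oneX e hu)) (regularX j (regular_qsum (near_oneX alpha hu)))).
by move=> x; rewrite /genocchi_kernel exprM qnumE.
Qed.

Lemma fermionic_int_lincomb u (r : seq nat) (c : nat -> K) (g : nat -> nat -> K) f :
  near_one u -> (forall i, absv (c i) <= 1) -> (forall i, regular (g i)) ->
  (forall x, f x = \sum_(i <- r) c i * g i x) ->
  fermionic_int absv p u f = \sum_(i <- r) c i * fermionic_int absv p u (g i).
Proof.
move=> hu hc hg ef; apply: fermionic_intE.
apply: cvg_ext (cvg_sum r (fun i => cvgZ (hc i) (fermionic_int_cvg hu (hg i)))) _ => N.
by rewrite (rsum_ext _ _ ef) rsum_sum; apply: eq_bigr => i _; rewrite rsumZ.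
Qed.

Lemma abs_binom_sign_le1 n i k : absv ('C(n, i)%:R * (-1) ^+ k) <= 1.
Proof. by rewrite absM absX absN1 expr1n mulr1 abs_natr_le1. Qed.

Lemma Fam_binomial u alpha e a m x :
  Fam (u ^+ e) (u ^+ alpha) a m x =
  \sum_(0 <= l < m.+1) 'C(m, l)%:R * (-1) ^+ l * genocchi_kernel u alpha e (l + a) x.
Proof.
rewrite /Fam /genocchi_kernel exprBn big_mkord mulr_sumr; apply: eq_bigr => i _.
by rewrite expr1n mulr1 -mulr_natl exprM !qnumE exprD; ring.
Qed.

Lemma Ham_binomial u alpha e a m x :
  Ham (u ^+ e) (u ^+ alpha) a m x =
  \sum_(0 <= i < a.+1) 'C(a, i)%:R * (-1) ^+ (a + i) *
    genocchi_kernel u^-1 alpha e (m + a - i) x.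
Proof.
rewrite /Ham /genocchi_kernel -opprB exprNn exprBn big_mkord !mulr_sumr.
apply: eq_bigr => [[i hi]] _ /=; rewrite (_ : m + a - i = m + (a - i))%N; last by lia.
by rewrite !exprD expr1n mulr1 -mulr_natl !qnumE exprM -!exprVn; ring.
Qed.

Lemma Genocchi_binomial_identity q alpha h a S :
  near_one q -> (0 < h)%N -> (a < S)%N ->
  let G := qGenocchi absv p alpha h q in
  let Gi := qGenocchi absv p alpha h q^-1 in
  \sum_(0 <= l < (S - a).+1) 'C(S - a, l)%:R * (-1) ^+ l * (G (l + a).+1 / (l + a).+1%:R)
  = if a == 0%N then (1 + q) + q ^+ (h + 1) * (Gi S.+1 / S.+1%:R)
    else \sum_(0 <= l < a.+1) 'C(a, l)%:R * (-1) ^+ (a + l) *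
           ((1 + q) + q ^+ (h + 1) * (Gi (S - l).+1 / (S - l).+1%:R)).
Proof.
move=> hq hh haS G Gi; set m := (S - a)%N.
have hm : (0 < m)%N by rewrite subn_gt0.
have hw := near_oneX (h - 1) hq; have ht := near_oneX alpha hq.
have eF := fermionic_int_lincomb hq (fun l => abs_binom_sign_le1 m l l)
  (fun l => regular_genocchi_kernel alpha (h - 1) (l + a) hq) (Fam_binomial q alpha (h - 1) a m).
have eH := fermionic_int_lincomb (near_oneV hq) (fun i => abs_binom_sign_le1 a i (a + i))
  (fun i => regular_genocchi_kernel alpha (h - 1) (m + a - i) (near_oneV hq))
  (Ham_binomial q alpha (h - 1) a m).
have := fermionic_int_Fam a hq hw ht hm; rewrite eF eH Fam0.
rewrite (_ : q ^+ 2 * q ^+ (h - 1) = q ^+ (h + 1)); last by rewrite -exprD; congr (_ ^+ _); lia.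
rewrite (_ : (m + a = S)%N); last by rewrite subnK // ltnW.
move=> hsym; rewrite /G /Gi; under eq_bigr do rewrite qGenocchiE; rewrite hsym.
case: eqP => [a0 | /eqP a0] /=.
  by rewrite a0 big_nat1 subn0 qGenocchiE bin0 mulr1n !mulr1 mul1r.
rewrite mulr0n mulr0 add0r; under [RHS]eq_bigr do rewrite mulrDr qGenocchiE.
rewrite big_split /= -mulr_suml sum_binom_sign_eq0 // mul0r add0r mulr_sumr.
by apply: eq_bigr => l _; ring.
Qed.

End NonArchimedean.

Theorem mainTheorem8
  (R : realType) (K : closedFieldType) (absv : K -> R)
  (p : nat) (Hp : prime p) (Hodd : odd p) (HK : is_Cp_abs absv p)
  (q : K) (Hq : absv (q - 1) < 1)
  (alpha h : nat) (Hh : (0 < h)%N)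
  (s : nat) (Hs : (2 <= s)%N) (n : 'I_s -> nat) (k : nat)
  (Hnk : (s * k < \sum_(d < s) n d)%N) :
  let S := (\sum_(d < s) n d)%N in
  let G := qGenocchi absv p alpha h q in
  let Gi := qGenocchi absv p alpha h q^-1 in
  \sum_(0 <= l < (S - s * k).+1)
     ('C(S - s * k, l))%:R * (-1) ^+ l * (G (l + s * k).+1 / ((l + s * k).+1)%:R)
  = if k == 0%N then
      (1 + q) + q ^+ (h + 1) * (Gi S.+1 / (S.+1)%:R)
    else
      \sum_(0 <= l < (s * k).+1)
        ('C(s * k, l))%:R * (-1) ^+ (s * k + l) *
        ((1 + q) + q ^+ (h + 1) * (Gi (S - l).+1 / ((S - l).+1)%:R)).
Proof.
move=> S G Gi.
case: HK => abs_ge0 [abs_eq0 [absM [absD [absp complete]]]].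
pose d := Num.max (absv (q - 1)) (absv (p%:R : K)).
have hpd : absv p%:R <= d by rewrite le_max lexx orbT.
have hd1 : d < 1 by rewrite gt_max Hq absp_lt1.
have hq : near_one absv d q by rewrite /near_one le_max lexx.
rewrite -(_ : (s * k == 0)%N = (k == 0)%N); last by rewrite muln_eq0 gtn_eqF // ltnW.
exact (Genocchi_binomial_identity abs_ge0 abs_eq0 absM absD Hp absp Hodd hpd hd1 complete
  alpha hq Hh Hnk).
Qed.
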